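(* Let $A$, $B$ be lattices that satisfy Whitman's condition (W) and that are each generated by a set of join prime elements and also generated by a set of meet prime elements. Let $D$ be a lattice and $g\colon A\to D$, $h\colon B\to D$ lattice epimorphisms. If the fiber product $\{(a,b)\in A\times B: g(a)=h(b)\}$ is a finitely generated sublattice of $A\times B$, then $g$ and $h$ are bounded.
   Context: Whitman's condition (W) for a lattice: for all finite subsets $S,T$, if $\bigwedge S\le\bigvee T$ then there is $s\in S$ with $s\le\bigvee T$ or there is $t\in T$ with $\bigwedge S\le t$. An element $p$ is join prime if $p\le x\vee y$ implies $p\le x$ or $p\le y$; meet prime dually. A lattice homomorphism $g\colon A\to D$ is lower bounded if for every $d\in D$ the set $\{x\in A: g(x)\ge d\}$ is empty or has a least element; upper bounded if for every $d$ the set $\{x\in A: g(x)\le d\}$ is empty or has a greatest element; bounded if both. *)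

(* lattices are mathcomp [latticeType]s (not necessarily bounded). *)
From HB Require Import structures.
From mathcomp Require Import all_boot all_order.
Set Implicit Arguments. Unset Strict Implicit. Unset Printing Implicit Defensive.
Import Order.Theory.
Local Open Scope order_scope.

Inductive genBy (T : Type) (mt jn : T -> T -> T) (X : T -> Prop) : T -> Prop :=
| genBy_base x : X x -> genBy mt jn X x
| genBy_meet x y : genBy mt jn X x -> genBy mt jn X y -> genBy mt jn X (mt x y)
| genBy_join x y : genBy mt jn X x -> genBy mt jn X y -> genBy mt jn X (jn x y).

Definition lgen d (L : latticeType d) (X : L -> Prop) : L -> Prop :=
  genBy (@Order.meet d L) (@Order.join d L) X.

Definition generated_by d (L : latticeType d) (X : L -> Prop) : Prop :=
  forall a : L, lgen X a.

(* Meet / join of a nonempty finite set {x0} ∪ s. *)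
Definition meetS d (L : latticeType d) (x0 : L) (s : seq L) : L :=
  foldr (@Order.meet d L) x0 s.
Definition joinS d (L : latticeType d) (x0 : L) (s : seq L) : L :=
  foldr (@Order.join d L) x0 s.

(* Whitman's condition (W), for nonempty finite subsets S = x0::s, T = y0::t. *)
Definition whitman d (L : latticeType d) : Prop :=
  forall (x0 : L) (s : seq L) (y0 : L) (t : seq L),
    meetS x0 s <= joinS y0 t ->
    (exists2 x, x \in x0 :: s & x <= joinS y0 t) \/
    (exists2 y, y \in y0 :: t & meetS x0 s <= y).

Definition join_prime d (L : latticeType d) (p : L) : Prop :=
  forall x y : L, p <= x `|` y -> p <= x \/ p <= y.
Definition meet_prime d (L : latticeType d) (p : L) : Prop :=
  forall x y : L, x `&` y <= p -> x <= p \/ y <= p.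

Definition gen_by_join_primes d (L : latticeType d) : Prop :=
  exists X : L -> Prop, (forall x, X x -> join_prime x) /\ generated_by X.
Definition gen_by_meet_primes d (L : latticeType d) : Prop :=
  exists X : L -> Prop, (forall x, X x -> meet_prime x) /\ generated_by X.

Definition lattice_hom d1 d2 (A : latticeType d1) (D : latticeType d2)
    (g : A -> D) : Prop :=
  (forall x y, g (x `&` y) = g x `&` g y) /\ (forall x y, g (x `|` y) = g x `|` g y).

Definition lattice_epi d1 d2 (A : latticeType d1) (D : latticeType d2)
    (g : A -> D) : Prop :=
  lattice_hom g /\ forall z : D, exists x : A, g x = z.

Definition lower_bounded d1 d2 (A : latticeType d1) (D : latticeType d2)
    (g : A -> D) : Prop :=
  forall z : D, (forall x : A, ~ (z <= g x)) \/
    (exists m : A, z <= g m /\ forall x : A, z <= g x -> m <= x).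
Definition upper_bounded d1 d2 (A : latticeType d1) (D : latticeType d2)
    (g : A -> D) : Prop :=
  forall z : D, (forall x : A, ~ (g x <= z)) \/
    (exists m : A, g m <= z /\ forall x : A, g x <= z -> x <= m).
Definition bounded_hom d1 d2 (A : latticeType d1) (D : latticeType d2)
    (g : A -> D) : Prop := lower_bounded g /\ upper_bounded g.

Definition prod_meet d1 d2 (A : latticeType d1) (B : latticeType d2)
    (p q : A * B) : A * B := (p.1 `&` q.1, p.2 `&` q.2).
Definition prod_join d1 d2 (A : latticeType d1) (B : latticeType d2)
    (p q : A * B) : A * B := (p.1 `|` q.1, p.2 `|` q.2).

Definition fiber_fin_gen d1 d2 d3 (A : latticeType d1) (B : latticeType d2)
    (D : latticeType d3) (g : A -> D) (h : B -> D) : Prop :=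
  exists S : seq (A * B),
    (forall p, p \in S -> g p.1 = h p.2) /\
    (forall a b, g a = h b <->
       genBy (@prod_meet d1 d2 A B) (@prod_join d1 d2 A B) (fun p => p \in S) (a, b)).

From HB Require Import structures.
From mathcomp Require Import all_boot all_order.
Set Implicit Arguments. Unset Strict Implicit. Unset Printing Implicit Defensive.
Import Order.Theory.
Local Open Scope order_scope.

(* The heart of the
   proof is one-sided: if B satisfies Whitman's condition (W) and is generated
   by join primes, then g is lower bounded.  For b in B we call a in A a lower
   witness for b when h b <= g a and a <= t.1 for every t in F with b <= t.2;
   a lower witness for b is the least a with h b <= g a.  Lower witnesses exist
   for join primes (by induction on F, using primality at joins), and the set of
   elements having one is closed under joins (trivially) and meets (by induction
   on F, using (W) at joins); so every element of B has one.  The meet of the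
   first components of the generators lying above b is what makes the
   generators of F harmless in both inductions.

   The three remaining claims follow by symmetry: exchanging the roles of
   (A, g) and (B, h), and passing to the order duals of A, B, D, preserve all
   the hypotheses and exchange lower and upper boundedness. *)

Lemma genBy_map (T U : Type) (mt jn : T -> T -> T) (mt' jn' : U -> U -> U)
    (X : T -> Prop) (Y : U -> Prop) (f : T -> U) :
  (forall x y, f (mt x y) = mt' (f x) (f y)) ->
  (forall x y, f (jn x y) = jn' (f x) (f y)) ->
  (forall x, X x -> Y (f x)) ->
  forall x, genBy mt jn X x -> genBy mt' jn' Y (f x).
Proof.
move=> fM fJ fXY x; elim=> {x} [x /fXY|x y _ IHx _ IHy|x y _ IHx _ IHy].
- exact: genBy_base.
- by rewrite fM; apply: genBy_meet.
- by rewrite fJ; apply: genBy_join.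
Qed.

(* Generation does not depend on the order of the two operations; this is what
   makes generation compatible with order duality. *)
Lemma genBy_flip (T : Type) (mt jn : T -> T -> T) (X : T -> Prop) (x : T) :
  genBy mt jn X x -> genBy jn mt X x.
Proof.
elim=> {x} [x Xx|x y _ IHx _ IHy|x y _ IHx _ IHy].
- exact: genBy_base.
- exact: genBy_join.
- exact: genBy_meet.
Qed.

Lemma meetS_le d (L : latticeType d) (x0 x : L) (s : seq L) :
  x \in s -> meetS x0 s <= x.
Proof.
elim: s => [|y s IHs] //=; rewrite in_cons => /orP [/eqP ->|/IHs xs].
- exact: leIl.
- exact: le_trans (leIr _ _) xs.
Qed.

Lemma le_meetS d (L : latticeType d) (z x0 : L) (s : seq L) :
  z <= x0 -> (forall x, x \in s -> z <= x) -> z <= meetS x0 s.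
Proof.
move=> zx0; elim: s => [|y s IHs] //= zs.
rewrite lexI zs ?mem_head //= IHs // => x xs.
by apply: zs; rewrite in_cons xs orbT.
Qed.

Lemma hom_meetS d1 d2 (A : latticeType d1) (D : latticeType d2) (g : A -> D)
    (x0 : A) (s : seq A) :
  (forall x y, g (x `&` y) = g x `&` g y) ->
  g (meetS x0 s) = meetS (g x0) (map g s).
Proof. by move=> gM; elim: s => [|y s IHs] //=; rewrite gM IHs. Qed.

Lemma meet_hom_le d1 d2 (A : latticeType d1) (D : latticeType d2) (g : A -> D) :
  (forall x y, g (x `&` y) = g x `&` g y) -> {homo g : x y / x <= y}.
Proof. by move=> gM x y /meet_idPl xy; apply/meet_idPl; rewrite -gM xy. Qed.

Lemma whitman2 d (L : latticeType d) (x1 x2 y1 y2 : L) :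
  whitman L -> x1 `&` x2 <= y1 `|` y2 ->
  [\/ x1 <= y1 `|` y2, x2 <= y1 `|` y2, x1 `&` x2 <= y1 | x1 `&` x2 <= y2].
Proof.
move=> W /(W x2 [:: x1] y2 [:: y1]) [[x]|[y]]; rewrite !inE => /orP [] /eqP ->.
- by move=> ?; apply: Or42.
- by move=> ?; apply: Or41.
- by move=> ?; apply: Or44.
- by move=> ?; apply: Or43.
Qed.

Lemma whitman_dual d (L : latticeType d) : whitman L -> whitman L^d.
Proof. by move=> W x0 s y0 t /(W y0 t x0 s) [] [z zin le]; [right | left]; exists z. Qed.

Lemma gen_by_join_primes_dual d (L : latticeType d) :
  gen_by_meet_primes L -> gen_by_join_primes L^d.
Proof.
move=> [X [Xprime Xgen]]; exists X; split; first exact: Xprime.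
by move=> a; apply: genBy_flip (Xgen a).
Qed.

Lemma lattice_epi_dual d1 d2 (A : latticeType d1) (D : latticeType d2) (g : A -> D) :
  lattice_epi g -> lattice_epi (g : A^d -> D^d).
Proof. by move=> [[gM gJ] gs]; split; first split. Qed.

Lemma fiber_fin_gen_dual d1 d2 d3 (A : latticeType d1) (B : latticeType d2)
    (D : latticeType d3) (g : A -> D) (h : B -> D) :
  fiber_fin_gen g h -> fiber_fin_gen (g : A^d -> D^d) (h : B^d -> D^d).
Proof.
move=> [S [HS HF]]; exists S; split; first exact: HS.
move=> a b; split=> Fab.
- by apply: genBy_flip; apply/HF.
- by apply/HF; apply: genBy_flip.
Qed.

Lemma upper_bounded_dual d1 d2 (A : latticeType d1) (D : latticeType d2) (g : A -> D) :
  lower_bounded (g : A^d -> D^d) -> upper_bounded g.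
Proof. by []. Qed.

Lemma fiber_fin_gen_swap d1 d2 d3 (A : latticeType d1) (B : latticeType d2)
    (D : latticeType d3) (g : A -> D) (h : B -> D) :
  fiber_fin_gen g h -> fiber_fin_gen h g.
Proof.
move=> [S [HS HF]]; exists [seq (q.2, q.1) | q <- S]; split.
  by move=> _ /mapP [q qS ->]; rewrite HS.
move=> b a; split=> [hg | Fba].
- move: ((HF a b).1 (esym hg)).
  apply: (genBy_map (f := fun p : A * B => (p.2, p.1))) => //.
  by move=> q qS; apply/mapP; exists q.
- apply/esym/(HF a b).2; move: Fba.
  apply: (genBy_map (f := fun p : B * A => (p.2, p.1))) => //.
  by move=> _ /mapP [[q1 q2] qS ->].
Qed.

Section LowerBound.
Variables (d1 d2 d3 : Order.disp_t)
  (A : latticeType d1) (B : latticeType d2) (D : latticeType d3)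
  (g : A -> D) (h : B -> D) (S : seq (A * B)).

Hypothesis g_meet : forall x y, g (x `&` y) = g x `&` g y.
Hypothesis g_join : forall x y, g (x `|` y) = g x `|` g y.
Hypothesis g_surj : forall z, exists x, g x = z.
Hypothesis h_meet : forall x y, h (x `&` y) = h x `&` h y.
Hypothesis h_join : forall x y, h (x `|` y) = h x `|` h y.
Hypothesis h_surj : forall z, exists y, h y = z.

Let fiber : A * B -> Prop :=
  genBy (@prod_meet d1 d2 A B) (@prod_join d1 d2 A B) (fun p => p \in S).
Hypothesis S_fiber : forall p, p \in S -> g p.1 = h p.2.
Hypothesis fiberE : forall a b, g a = h b <-> fiber (a, b).

Definition below_fiber (b : B) (a : A) : Prop :=
  forall t, fiber t -> b <= t.2 -> a <= t.1.

(* h b <= g a and a is below the fiber above b; such an a is then the least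
   element of A whose image lies above h b (see lower_bounded_of_witnesses). *)
Definition lower_witness (b : B) (a : A) : Prop :=
  h b <= g a /\ below_fiber b a.

Lemma below_fiber_ind (b : B) (a : A) :
  (forall q, q \in S -> b <= q.2 -> a <= q.1) ->
  (forall x y, fiber x -> fiber y -> b <= x.2 `|` y.2 ->
     (b <= x.2 -> a <= x.1) -> (b <= y.2 -> a <= y.1) -> a <= x.1 `|` y.1) ->
  below_fiber b a.
Proof.
move=> base join t; elim=> {t} [q|x y _ IHx _ IHy|x y Fx IHx Fy IHy].
- exact: base.
- by rewrite /= !lexI => /andP [b_x b_y]; rewrite IHx ?IHy.
- by move=> bxy; apply: join.
Qed.

(* Meeting a preimage of h b with the first components of the generators above
   b gives an element with image above h b that is below all those generators. *)
Lemma below_generators (b : B) :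
  exists2 a, h b <= g a & forall q, q \in S -> b <= q.2 -> a <= q.1.
Proof.
have [a0 ga0] := g_surj (h b).
exists (meetS a0 [seq q.1 | q <- S & b <= q.2]).
- rewrite hom_meetS // ga0; apply: le_meetS => // _ /mapP [_ /mapP [q] + -> ->].
  rewrite mem_filter => /andP [bq qS]; rewrite S_fiber //.
  exact: meet_hom_le.
- by move=> q qS bq; apply: meetS_le; apply/mapP; exists q; rewrite ?mem_filter ?bq.
Qed.

(* Join primes have lower witnesses: a join of fiber elements above p has one
   of its two arguments above p. *)
Lemma lower_witness_join_prime (p : B) : join_prime p -> exists a, lower_witness p a.
Proof.
move=> pprime; have [a ga aS] := below_generators p; exists a; split=> //.
apply: below_fiber_ind => // x y _ _ /pprime [px|py] IHx IHy.
- exact: le_trans (IHx px) (leUl _ _).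
- exact: le_trans (IHy py) (leUr _ _).
Qed.

Lemma lower_witness_join (b1 b2 : B) (a1 a2 : A) :
  lower_witness b1 a1 -> lower_witness b2 a2 -> lower_witness (b1 `|` b2) (a1 `|` a2).
Proof.
move=> [ga1 Ka1] [ga2 Ka2]; split; first by rewrite h_join g_join leU2.
by move=> t Ft; rewrite leUx => /andP [b1t b2t]; rewrite leUx Ka1 ?Ka2.
Qed.

Lemma lower_witness_meet (b1 b2 : B) (a1 a2 : A) :
  whitman B -> lower_witness b1 a1 -> lower_witness b2 a2 ->
  exists a, lower_witness (b1 `&` b2) a.
Proof.
move=> W [ga1 Ka1] [ga2 Ka2]; have [a0 ga0 a0S] := below_generators (b1 `&` b2).
have h_le := meet_hom_le h_meet.
exists (a1 `&` (a2 `&` a0)); split.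
  rewrite !g_meet !lexI ga0 andbT.
  by rewrite (le_trans (h_le _ _ (leIl _ _))) ?(le_trans (h_le _ _ (leIr _ _))).
apply: below_fiber_ind => [q qS bq|x y Fx Fy].
  by rewrite !meetA (le_trans (leIr _ _)) ?a0S.
have Fxy : fiber (prod_join x y) by apply: genBy_join.
case/(whitman2 W) => [b1xy|b2xy|b_x|b_y] IHx IHy.
- exact: le_trans (leIl _ _) (Ka1 _ Fxy b1xy).
- exact: le_trans (le_trans (leIr _ _) (leIl _ _)) (Ka2 _ Fxy b2xy).
- exact: le_trans (IHx b_x) (leUl _ _).
- exact: le_trans (IHy b_y) (leUr _ _).
Qed.

(* If every element of B has a lower witness, then g is lower bounded: every z
   in D is h b for some b, and a witness for b is the least a with z <= g a. *)
Lemma lower_bounded_of_witnesses :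
  (forall b, exists a, lower_witness b a) -> lower_bounded g.
Proof.
move=> wit z; right; have [b hb] := h_surj z; have [a [ga Ka]] := wit b.
exists a; split; first by rewrite -hb.
move=> x zx; have [a' ga'] := g_surj (h b).
have Fxa' : fiber (x `&` a', b).
  by apply/fiberE; rewrite g_meet ga' hb; apply/meet_idPr.
exact: le_trans (Ka _ Fxa' (lexx _)) (leIl _ _).
Qed.

End LowerBound.

Lemma fiber_lower_bounded d1 d2 d3 (A : latticeType d1) (B : latticeType d2)
    (D : latticeType d3) (g : A -> D) (h : B -> D) :
  whitman B -> gen_by_join_primes B -> lattice_epi g -> lattice_epi h ->
  fiber_fin_gen g h -> lower_bounded g.
Proof.
move=> W [P [Pprime Pgen]] [[gM gJ] gs] [[hM hJ] hs] [S [HS HF]].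
apply: (lower_bounded_of_witnesses (S := S)) => // b.
elim: (Pgen b) => {b} [p /Pprime|b1 b2 _ [a1 w1] _ [a2 w2]|b1 b2 _ [a1 w1] _ [a2 w2]].
- exact: lower_witness_join_prime.
- exact: lower_witness_meet W w1 w2.
- by exists (a1 `|` a2); apply: lower_witness_join.
Qed.

Theorem mainTheorem4 (d1 d2 d3 : Order.disp_t)
  (A : latticeType d1) (B : latticeType d2) (D : latticeType d3)
  (g : A -> D) (h : B -> D) :
  whitman A -> gen_by_join_primes A -> gen_by_meet_primes A ->
  whitman B -> gen_by_join_primes B -> gen_by_meet_primes B ->
  lattice_epi g -> lattice_epi h ->
  fiber_fin_gen g h ->
  bounded_hom g /\ bounded_hom h.
Proof.
move=> WA JA MA WB JB MB g_epi h_epi fib.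
have fib' := fiber_fin_gen_swap fib.
split; split.
- exact: fiber_lower_bounded WB JB g_epi h_epi fib.
- apply: upper_bounded_dual; exact: fiber_lower_bounded (whitman_dual WB)
    (gen_by_join_primes_dual MB) (lattice_epi_dual g_epi) (lattice_epi_dual h_epi)
    (fiber_fin_gen_dual fib).
- exact: fiber_lower_bounded WA JA h_epi g_epi fib'.
- apply: upper_bounded_dual; exact: fiber_lower_bounded (whitman_dual WA)
    (gen_by_join_primes_dual MA) (lattice_epi_dual h_epi) (lattice_epi_dual g_epi)
    (fiber_fin_gen_dual fib').
Qed.
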